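(* Let $p$ be an odd prime. Then \[ \sum_{k=0}^{p-1}k\frac{(\frac{1}{p+1})_k^{p+1}}{k!^{p+1}}\equiv 0\pmod{p^3}. \]
   Context: $(a)_k=a(a+1)\cdots(a+k-1)$ is the Pochhammer symbol, with $(a)_0=1$. The congruence is between $p$-integral rational numbers: it means that the sum, a rational number whose denominator is coprime to $p$, has numerator divisible by $p^3$. *)

From mathcomp Require Import all_boot all_order all_algebra.
Set Implicit Arguments. Unset Strict Implicit. Unset Printing Implicit Defensive.
Import Order.TTheory GRing.Theory Num.Theory.
Local Open Scope ring_scope.

Definition poch (a : rat) (k : nat) : rat := \prod_(i < k) (a + i%:R).

(* x is a p-integral rational whose numerator is divisible by p^e,
   i.e. x == 0 (mod p^e) in Z_(p). *)
Definition rat_cong0 (p e : nat) (x : rat) : Prop :=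
  ~~ (p %| `|denq x|)%N /\ ((p ^ e)%:Z %| numq x)%Z.

(* Put a = 1/(p+1) and x_k = (a)_k / k!.  As a = 1 - p/(p+1) is 1 modulo p, so is
   x_k for k < p, and for such x the binomial theorem gives
   x^(p+1) = (p+1) x - p modulo p^3, because p divides C(p+1, 2) when p is odd.
   Hence the sum is (p+1) sum_k k x_k - p sum_k k modulo p^3, and the identity
   sum_(k < n+2) k (a)_k / k! = a (a+2)_n / n! turns the first term into
   (a+2)_(p-2) / (p-2)!.  The last factor of (a+2)_(p-2) is a + p - 1 = p^2 a, while
   (a+2)_(p-3) = (3)_(p-3) = (p-1)!/2 modulo p, so this term is p^2 a (p-1)/2 modulo
   p^3, which agrees with p sum_k k = p^2 (p-1)/2 since a = 1 modulo p. *)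

From HB Require Import structures.
From mathcomp Require Import all_boot all_order all_algebra.
From mathcomp Require Import ring.
Set Implicit Arguments.
Unset Strict Implicit.
Unset Printing Implicit Defensive.

Import GRing.Theory Num.Theory.
Local Open Scope ring_scope.

Lemma natr_fact_neq0 n : n`!%:R != 0 :> rat.
Proof. by rewrite pnatr_eq0 -lt0n fact_gt0. Qed.

Lemma poch0 a : poch a 0 = 1.
Proof. by rewrite /poch big_ord0. Qed.

Lemma pochS a k : poch a k.+1 = poch a k * (a + k%:R).
Proof. by rewrite /poch big_ord_recr. Qed.

Lemma pochSl a k : poch a k.+1 = a * poch (a + 1) k.
Proof.
rewrite /poch big_ord_recl addr0; congr (_ * _); apply: eq_bigr => i _.
by rewrite /= /bump /= natrD addrA addrAC.
Qed.

Lemma poch_nat n k : poch n.+1%:R k * n`!%:R = (n + k)`!%:R.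
Proof.
elim: k => [|k IHk]; first by rewrite poch0 mul1r addn0.
by rewrite pochS mulrAC IHk addnS factS natrM mulrC -natrD addSn.
Qed.

Lemma sum_mul_poch_fact a n :
  \sum_(k < n.+2) k%:R * poch a k / k`!%:R = a * poch (a + 2) n / n`!%:R.
Proof.
elim: n => [|n IHn].
  by rewrite !big_ord_recr big_ord0 /= pochS !poch0 !mul0r add0r addr0 !mul1r !divr1.
have a_add2 : a + 1 + 1 = a + 2 by rewrite -addrA.
rewrite big_ord_recr /= IHn pochSl pochSl a_add2 pochS !factS !natrM.
by field; rewrite natr_fact_neq0 addrC natr1 -natrD !pnatr_eq0.
Qed.

Section LocalizationAtPrime.

Variable p : nat.
Hypothesis p_prime : prime p.

(* For prime [p], [pint] is the local ring Z_(p) and [pdvd e] its ideal p^e Z_(p). *)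
Definition pint : {pred rat} := fun x => coprime p `|denq x|.

Lemma pintE x : (x \in pint) = coprime p `|denq x|.
Proof. by []. Qed.

Lemma pint_frac (n d : int) : coprime p `|d| -> n%:~R / d%:~R \in pint.
Proof.
rewrite pintE; case: divqP => [_ _ | k x _]; first by rewrite coprimen1.
by rewrite abszM => /coprime_dvdr; apply; apply: dvdn_mull.
Qed.

Lemma pint_natV d : coprime p d -> d%:R^-1 \in pint.
Proof. by move=> cpd; have := @pint_frac 1 d cpd; rewrite div1r. Qed.

Lemma pint_subring_closed : subring_closed pint.
Proof.
have den0 x : (denq x)%:~R != 0 :> rat by rewrite intr_eq0 denq_neq0.
split=> [|x y px py|x y px py]; first by rewrite pintE coprimen1.
  have -> : x - y = (numq x * denq y - numq y * denq x)%:~R / (denq x * denq y)%:~R.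
    rewrite -[x in LHS]divq_num_den -[y in LHS]divq_num_den rmorphB !rmorphM /=.
    by field; rewrite !den0.
  by apply: pint_frac; rewrite abszM coprimeMr; apply/andP.
have -> : x * y = (numq x * numq y)%:~R / (denq x * denq y)%:~R.
  rewrite -[x in LHS]divq_num_den -[y in LHS]divq_num_den !rmorphM /=.
  by field; rewrite !den0.
by apply: pint_frac; rewrite abszM coprimeMr; apply/andP.
Qed.

HB.instance Definition _ := GRing.isSubringClosed.Build rat pint pint_subring_closed.

Lemma pint_factV k : (k < p)%N -> k`!%:R^-1 \in pint.
Proof.
move=> ltkp; apply: pint_natV; elim: k ltkp => [|k IHk] ltSkp; first exact: coprimen1.
by rewrite factS coprimeMr (IHk (ltnW ltSkp)) andbT prime_coprime // gtnNdvd.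
Qed.

Lemma natr_p_neq0 : p%:R != 0 :> rat.
Proof. by rewrite pnatr_eq0 -lt0n prime_gt0. Qed.

Definition pdvd (e : nat) : {pred rat} := fun x => x / p%:R ^+ e \in pint.

Lemma pdvdE e x : (x \in pdvd e) = (x / p%:R ^+ e \in pint).
Proof. by []. Qed.

Lemma pdvd_zmod_closed e : zmod_closed (pdvd e).
Proof. by split=> [|x y px py]; rewrite pdvdE ?mul0r ?rpred0 // mulrBl rpredB. Qed.

HB.instance Definition _ e := GRing.isZmodClosed.Build rat (pdvd e) (pdvd_zmod_closed e).

Lemma pdvd0E x : (x \in pdvd 0) = (x \in pint).
Proof. by rewrite pdvdE expr0 divr1. Qed.

Lemma pdvd_pintM e x y : x \in pint -> y \in pdvd e -> x * y \in pdvd e.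
Proof. by move=> px py; rewrite pdvdE -mulrA rpredM. Qed.

Lemma pdvdM e f x y : x \in pdvd e -> y \in pdvd f -> x * y \in pdvd (e + f).
Proof. by move=> px py; rewrite pdvdE exprD invfM mulrACA rpredM. Qed.

Lemma pdvdW e f x : (f <= e)%N -> x \in pdvd e -> x \in pdvd f.
Proof.
move=> /subnK <- px; rewrite pdvdE.
have -> : x / p%:R ^+ f = x / p%:R ^+ (e - f + f) * p%:R ^+ (e - f).
  by rewrite exprD; field; rewrite !expf_neq0 ?natr_p_neq0.
by rewrite rpredM ?rpredX ?rpred_nat.
Qed.

Lemma pdvd_natp : p%:R \in pdvd 1.
Proof. by rewrite pdvdE expr1 divff ?rpred1 ?natr_p_neq0. Qed.

Lemma pdvdX e n x : x \in pdvd e -> x ^+ n \in pdvd (e * n).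
Proof.
move=> px; elim: n => [|n IHn]; first by rewrite expr0 muln0 pdvd0E rpred1.
by rewrite exprS mulnS pdvdM.
Qed.

Lemma rat_cong0_pdvd e x : x \in pdvd e -> rat_cong0 p e x.
Proof.
move=> px; set y := x / p%:R ^+ e in px.
have x_eq : x = p%:R ^+ e * y by rewrite mulrC divfK // expf_neq0 ?natr_p_neq0.
split; first by rewrite -prime_coprime // -pintE x_eq rpredM ?rpredX ?rpred_nat.
have num_eq : numq x * denq y = (p ^ e)%:Z * numq y * denq x.
  apply: (@intr_inj rat); rewrite !rmorphM /= !numqE -pmulrn natrX x_eq; ring.
have coprime_pe : coprime (p ^ e) `|denq y| by rewrite coprimeXl // prime_coprime.
rewrite unfold_in /= -(Gauss_dvdl _ coprime_pe) -abszM num_eq !abszM.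
by rewrite -mulnA dvdn_mulr.
Qed.

Lemma poch_pint a k : a \in pint -> poch a k \in pint.
Proof. by move=> pa; apply: rpred_prod => i _; rewrite rpredD ?rpred_nat. Qed.

Lemma poch_pdvd_sub e a b k : a \in pint -> b \in pint -> a - b \in pdvd e ->
  poch a k - poch b k \in pdvd e.
Proof.
move=> pa pb pab; elim: k => [|k IHk]; first by rewrite !poch0 subrr rpred0.
have -> : poch a k.+1 - poch b k.+1
    = (a + k%:R) * (poch a k - poch b k) + poch b k * (a - b).
  by rewrite !pochS; ring.
apply: rpredD; apply: pdvd_pintM => //; first by rewrite rpredD ?rpred_nat.
exact: poch_pint.
Qed.

Lemma pdvd_exp1D_sub u n : u \in pdvd 1 ->
  (1 + u) ^+ n - (1 + n%:R * u + 'C(n, 2)%:R * u ^+ 2) \in pdvd 3.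
Proof.
move=> pu; elim: n => [|n IHn]; first by rewrite expr0 !mul0r !addr0 subrr rpred0.
have -> : (1 + u) ^+ n.+1 - (1 + n.+1%:R * u + 'C(n.+1, 2)%:R * u ^+ 2)
    = (1 + u) * ((1 + u) ^+ n - (1 + n%:R * u + 'C(n, 2)%:R * u ^+ 2))
      + 'C(n, 2)%:R * u ^+ 3.
  by rewrite exprS binS bin1 natrD -addn1 natrD; ring.
have pu1 : 1 + u \in pint by rewrite rpredD ?rpred1 // -pdvd0E (pdvdW _ pu).
apply: rpredD; first exact: pdvd_pintM.
by apply: pdvd_pintM; [exact: rpred_nat | exact: (pdvdX 3 pu)].
Qed.

Lemma pdvd_expSp_sub x : odd p -> x - 1 \in pdvd 1 ->
  x ^+ p.+1 - (p.+1%:R * x - p%:R) \in pdvd 3.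
Proof.
move=> p_odd; set u := x - 1 => pu; have -> : x = 1 + u by rewrite addrC subrK.
have bin2Sp : 'C(p.+1, 2) = (p * (p.-1./2).+1)%N.
  by rewrite binS bin1 bin2odd // mulnS addnC.
have -> : (1 + u) ^+ p.+1 - (p.+1%:R * (1 + u) - p%:R)
    = (1 + u) ^+ p.+1 - (1 + p.+1%:R * u + 'C(p.+1, 2)%:R * u ^+ 2)
      + (p.-1./2).+1%:R * (p%:R * u ^+ 2).
  by rewrite bin2Sp natrM -addn1 natrD; ring.
apply: rpredD; first exact: pdvd_exp1D_sub.
by apply: pdvd_pintM; [exact: rpred_nat | exact: (pdvdM pdvd_natp (pdvdX 2 pu))].
Qed.

End LocalizationAtPrime.

Section InverseSuccessor.

Variable p : nat.
Hypothesis p_prime : prime p.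

Local Notation a := (p.+1%:R^-1 : rat).

Lemma pint_inv_succ : a \in pint p.
Proof. by apply: pint_natV; rewrite prime_coprime // -addn1 dvdn_addr // Euclid_dvd1. Qed.

Lemma inv_succ_sub1 : a - 1 \in pdvd p 1.
Proof.
have -> : a - 1 = - (a * p%:R) by rewrite -natr1; field; rewrite natr1 pnatr_eq0.
by rewrite rpredN; apply: pdvd_pintM; [exact: pint_inv_succ | exact: pdvd_natp].
Qed.

Lemma poch_inv_succ_fact_sub1 k : (k < p)%N -> poch a k / k`!%:R - 1 \in pdvd p 1.
Proof.
move=> lt_kp; have fact_poch1 : k`!%:R = poch 1 k by rewrite -(poch_nat 0 k) mulr1.
have -> : poch a k / k`!%:R - 1 = k`!%:R^-1 * (poch a k - poch 1 k).
  by rewrite -fact_poch1; field; rewrite natr_fact_neq0.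
apply: pdvd_pintM; first exact: pint_factV.
by apply: poch_pdvd_sub; [exact: pint_inv_succ | exact: rpred1 | exact: inv_succ_sub1].
Qed.

Lemma poch_inv_succ_add2_sub m : p = m.+3 ->
  poch (a + 2) m.+1 / m.+1`!%:R - p%:R * \sum_(k < p) k%:R \in pdvd p 3.
Proof.
move=> p_eq.
have a_last : a + 2 + m%:R = p%:R ^+ 2 * a.
  by rewrite p_eq !mulrS; field; rewrite -!mulrS pnatr_eq0.
have sum_k : \sum_(k < p) k%:R = p%:R * m.+2%:R / 2 :> rat.
  apply: (canRL (mulfK _)) => //; rewrite -natr_sum -!natrM.
  by rewrite -(big_mkord xpredT (fun k => k)) bin2_sum mulnC -mul_bin_diag bin1 p_eq.
have poch3 : poch 3 m = m.+2%:R * m.+1`!%:R / 2.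
  by apply: (canRL (mulfK _)); rewrite // (poch_nat 2 m) add2n factS natrM.
have -> : poch (a + 2) m.+1 / m.+1`!%:R - p%:R * \sum_(k < p) k%:R
    = a / m.+1`!%:R * (p%:R ^+ 2 * (poch (a + 2) m - poch 3 m))
      + m.+2%:R / 2 * (p%:R ^+ 2 * (a - 1)).
  by rewrite pochS a_last sum_k poch3; field; rewrite addrC natr1 pnatr_eq0 natr_fact_neq0.
have pint_a_fact : a / m.+1`!%:R \in pint p.
  by apply: rpredM; [exact: pint_inv_succ | apply: (pint_factV p_prime); rewrite p_eq].
have pint_half : m.+2%:R / 2 \in pint p.
  apply: rpredM; first exact: rpred_nat.
  by apply: pint_natV; rewrite prime_coprime // gtnNdvd // p_eq.
have p2 : p%:R ^+ 2 \in pdvd p 2 by apply: (pdvdX 2 (pdvd_natp p_prime)).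
apply: rpredD; apply: pdvd_pintM => //; apply: (pdvdM p2); last exact: inv_succ_sub1.
apply: poch_pdvd_sub; [by rewrite rpredD ?pint_inv_succ ?rpred_nat | exact: rpred_nat |].
by rewrite -addrA (_ : 2 - 3 = -1) ?inv_succ_sub1 //; ring.
Qed.

End InverseSuccessor.

Theorem corollary1 (p : nat) (hp : prime p) (hodd : odd p) :
  rat_cong0 p 3
    (\sum_(k < p)
       (k%:R * poch (p.+1%:R)^-1 k ^+ p.+1 / (k`!)%:R ^+ p.+1 : rat)).
Proof.
have [m p_eq] : exists m, p = m.+3 by exists (p - 3)%N; rewrite -addn3 subnK // odd_prime_gt2.
apply: (rat_cong0_pdvd hp); set a := (p.+1%:R)^-1.
have sum_id : \sum_(k < p) k%:R * poch a k / k`!%:R = a * poch (a + 2) m.+1 / m.+1`!%:R.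
  by rewrite p_eq sum_mul_poch_fact.
rewrite -(subrK (\sum_(k < p) (p.+1%:R * (k%:R * poch a k / k`!%:R) - p%:R * k%:R))
                (\sum_(k < p) _)).
apply: rpredD.
  rewrite -sumrB; apply: rpred_sum => k _.
  have -> : k%:R * poch a k ^+ p.+1 / k`!%:R ^+ p.+1
              - (p.+1%:R * (k%:R * poch a k / k`!%:R) - p%:R * k%:R)
      = k%:R * ((poch a k / k`!%:R) ^+ p.+1 - (p.+1%:R * (poch a k / k`!%:R) - p%:R)).
    by rewrite expr_div_n; ring.
  apply: pdvd_pintM; first exact: rpred_nat.
  exact/(pdvd_expSp_sub hp hodd)/(poch_inv_succ_fact_sub1 hp).
rewrite sumrB -!mulr_sumr sum_id !mulrA mulfV ?mul1r ?pnatr_eq0 //.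
exact/(poch_inv_succ_add2_sub hp p_eq).
Qed.
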